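(* Let $f:\mathbb{R}^{n_x}\to\mathbb{R}^{n_x}$ be differentiable with Jacobian $F_x$, $L:\mathbb{R}^{n_x}\to\mathbb{R}^{n_x\times n_\beta}$, $Q$ an $n_\beta\times n_\beta$ diffusion matrix, $\overline{x}_a\in\mathbb{R}^{n_x}$, $P_a$ a covariance matrix, $\mu>0$, $\Delta t_k>0$. Let $m(t),P(t)$ solve $\frac{dm}{dt}=f(m)$, $\frac{dP}{dt}=PF_x^T(m)+F_x(m)P+L(m)QL^T(m)$ with $m(0)=\overline{x}_a$, $P(0)=P_a$, and take the conditional mean and covariance of a target born with time lag $t$ to be $\mathrm{E}[x_k|t]=m(t)$, $\mathrm{C}[x_k|t]=P(t)$. Let the lag $T$ have density $\frac{\mu}{1-e^{-\mu\Delta t_k}}e^{-\mu t}\chi_{[0,\Delta t_k)}(t)$ and define the mean and covariance at the time of birth by $\overline{x}_{b,k}=\mathrm{E}[\mathrm{E}[x_k|T]]$ and $P_{b,k}=\mathrm{C}[\mathrm{E}[x_k|T]]+\mathrm{E}[\mathrm{C}[x_k|T]]$. Then $$\overline{x}_{b,k}=\frac{\mu}{1-e^{-\mu\Delta t_k}}\overline{x}(\Delta t_k),\qquad P_{b,k}=\frac{\mu}{1-e^{-\mu\Delta t_k}}\Sigma(\Delta t_k)-\overline{x}_{b,k}\overline{x}_{b,k}^T,$$ where $\overline{x}(\cdot),\Sigma(\cdot)$ are obtained by solving jointly, from $t=0$ to $\Delta t_k$, the ODE system $\frac{dm}{dt}=f(m)$, $\frac{dP}{dt}=PF_x^T(m)+F_x(m)P+L(m)QL^T(m)$,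 $\frac{d\overline{x}}{dt}=m\,e^{-\mu t}$, $\frac{d\Sigma}{dt}=[P+mm^T]e^{-\mu t}$, with initial conditions $m(0)=\overline{x}_a$, $P(0)=P_a$, $\overline{x}(0)=0$, $\Sigma(0)=0$.
   Context: Setting: targets appear according to a Poisson process in time, with state distributed $\mathcal{N}(\overline{x}_a,P_a)$ at appearance, have exponential life spans with rate $\mu$, and move according to the nonlinear time-invariant SDE $dx=f(x)dt+L(x)d\beta$, with $\beta$ Brownian motion with diffusion matrix $Q$. The moment ODEs for $m,P$ result from the approximations $f(x)\approx f(m)+F_x(m)(x-m)$ and $L(x)\approx L(m)$. A target born at time step $k$ ($\Delta t_k=t_k-t_{k-1}$) appeared with lag $T\in[0,\Delta t_k)$ having the truncated exponential density above; $\chi_{[0,\Delta t_k)}$ is the indicator function. *)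

From HB Require Import structures.
From mathcomp Require Import all_boot all_order all_algebra.
From mathcomp Require Import all_classical all_reals all_analysis.
Set Implicit Arguments. Unset Strict Implicit. Unset Printing Implicit Defensive.
Import Order.TTheory GRing.Theory Num.Theory.
Import numFieldNormedType.Exports.
Local Open Scope classical_set_scope.
Local Open Scope ring_scope.

Definition jacobian_cV (R : realType) (n : nat) (f : 'cV[R]_n -> 'cV[R]_n)
  (x : 'cV[R]_n) : 'M[R]_n :=
  \matrix_(i, j) ('d f x (delta_mx j ord0) : 'cV[R]_n) i ord0.

Definition lag_density (R : realType) (mu dt t : R) : R :=
  mu / (1 - expR (- (mu * dt))) * expR (- (mu * t)).

Definition lag_mean (R : realType) (p q : nat) (mu dt : R)
  (g : R -> 'M[R]_(p, q)) : 'M[R]_(p, q) :=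
  \matrix_(i, j) Rintegral lebesgue_measure `[0, dt[
     (fun t => lag_density mu dt t * g t i j).

Definition birth_mean (R : realType) (n : nat) (mu dt : R)
  (m : R -> 'cV[R]_n) : 'cV[R]_n := lag_mean mu dt m.

Definition birth_cov (R : realType) (n : nat) (mu dt : R)
  (m : R -> 'cV[R]_n) (P : R -> 'M[R]_n) : 'M[R]_n :=
  let xb := birth_mean mu dt m in
  lag_mean mu dt (fun t => (m t - xb) *m (m t - xb)^T) + lag_mean mu dt P.

From HB Require Import structures.
From mathcomp Require Import all_boot all_order all_algebra.
From mathcomp Require Import all_classical all_reals all_analysis.
From mathcomp Require Import ring.
Import Order.TTheory GRing.Theory Num.Theory.
Import numFieldNormedType.Exports.
Local Open Scope classical_set_scope.
Local Open Scope ring_scope.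

(* Under the lag density c e^{-mu t} on [0, dt), the lag mean of g is
   c \int_0^dt e^{-mu t} g(t) dt, so by the fundamental theorem of calculus the
   augmented ODEs make c xbar(dt) and c Sig(dt) the lag means of m and P + m m^T.
   Since the density has mass one, the covariance of m(T) is E[m m^T] - E[m] E[m]^T,
   and adding E[P] gives the formula for P_b. *)

Section matrix_continuity.
Context {K : numFieldType}.

Lemma continuous_mxP (T : topologicalType) m n (M : T -> 'M[K]_(m, n)) x :
  {for x, continuous M} <-> forall i j, {for x, continuous (fun y => M y i j)}.
Proof.
split=> [cM i j|cM]; first exact: continuous_comp cM (@coord_continuous _ _ _ i j _).
apply/cvg_mx_entourageP => A entA.
apply: filter_forall => i; apply: filter_forall => j.
have h : \forall y \near x, A (M x i j, M y i j).
  by move: (cM i j) => /cvg_entourageP; apply.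
by apply: filterS h => y; rewrite /= inE.
Qed.

Lemma continuous_within_mxP (A : set K) m n (M : K -> 'M[K]_(m, n)) :
  {within A, continuous M} <->
  forall i j, {within A, continuous (fun t => M t i j)}.
Proof.
split=> [cM i j x|cM x]; first exact: (@continuous_mxP (subspace A) _ _ M x).1 (cM x) i j.
by apply/(@continuous_mxP (subspace A)) => i j; exact: cM.
Qed.

Lemma continuous_within_outer (A : set K) n (u v : K -> 'cV[K]_n) :
  {within A, continuous u} -> {within A, continuous v} ->
  {within A, continuous (fun t => u t *m (v t)^T)}.
Proof.
move=> /continuous_within_mxP cu /continuous_within_mxP cv.
apply/continuous_within_mxP => i j x.
rewrite (_ : (fun t => _) = fun t => u t i ord0 * v t j ord0); last first.
  by apply/funext => t; rewrite !mxE big_ord1 mxE.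
exact: continuousM (cu _ _ x) (cv _ _ x).
Qed.

End matrix_continuity.

Lemma is_derive_entry {R : realFieldType} {p q} {M : R -> 'M[R]_(p, q)} {t : R} {D} i j :
  is_derive t (1 : R) M D -> is_derive t (1 : R) (fun s => M s i j) (D i j).
Proof.
move=> [dM <-]; have dMij := (derivable_mxP M t 1).1 dM i j.
by apply: DeriveDef => //; rewrite derive_mx // mxE.
Qed.

Lemma is_derive_expN {R : realType} (a t : R) :
  is_derive t (1 : R) (fun s => expR (- (a * s))) (- a * expR (- (a * t))).
Proof. by apply: trigger_derive; rewrite /GRing.scale /= mulr1 mulrN mulNr mulrC. Qed.

Lemma continuous_expN {R : realType} (a : R) :
  continuous (fun t : R => expR (- (a * t))).
Proof.
move=> t; apply: differentiable_continuous; apply/derivable1_diffP.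
by case: (is_derive_expN a t).
Qed.

Lemma Rintegral_continuous_FTC2 {R : realType} (a b : R) (g F : R -> R) :
  a < b -> {within `[a, b], continuous g} -> {within `[a, b], continuous F} ->
  (forall t, a < t < b -> is_derive t (1 : R) F (g t)) ->
  Rintegral lebesgue_measure `[a, b[ g = F b - F a.
Proof.
move=> ab cg cF dF.
have ig : lebesgue_measure.-integrable `[a, b] (EFin \o g).
  by apply: continuous_compact_integrable => //; exact: segment_compact.
rewrite Rintegral_itv_bndo_bndc; last first.
  by apply: integrableS ig => //; apply: subset_itvl; rewrite bnd_simp.
have [_ Fa Fb] := (continuous_within_itvP _ ab).1 cF.
rewrite /Rintegral (@continuous_FTC2 _ g F a b ab cg) -?EFinB //.
- by split => // x; rewrite in_itv /= => /dF [].
- by move=> x; rewrite in_itv /= => /dF [_ <-]; rewrite derive1E.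
Qed.

Section lag_expectation.
Context {R : realType}.
Variables mu dt : R.
Hypotheses (mu_gt0 : 0 < mu) (dt_gt0 : 0 < dt).

Local Notation lag_scale := (mu / (1 - expR (- (mu * dt)))).

Definition lag_expect (h : R -> R) : R :=
  Rintegral lebesgue_measure `[0, dt[ (fun t => lag_density mu dt t * h t).

Lemma eq_lag_expect (h1 h2 : R -> R) : h1 =1 h2 -> lag_expect h1 = lag_expect h2.
Proof. by move=> /funext ->. Qed.

Lemma continuous_lag_density : continuous (lag_density mu dt).
Proof.
move=> t; exact: (continuousM (@cst_continuous R R _ t) (continuous_expN mu t)).
Qed.

Lemma continuous_lag_weighted (h : R -> R) : {within `[0, dt], continuous h} ->
  {within `[0, dt], continuous (fun t => lag_density mu dt t * h t)}.
Proof.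
by move=> ch x; apply: continuousM (ch x); exact/continuous_subspaceT/continuous_lag_density.
Qed.

Lemma lag_integrable (h : R -> R) : {within `[0, dt], continuous h} ->
  lebesgue_measure.-integrable `[0, dt[
    (EFin \o (fun t => lag_density mu dt t * h t)).
Proof.
move=> /continuous_lag_weighted ch.
have : lebesgue_measure.-integrable `[0, dt]
    (EFin \o (fun t => lag_density mu dt t * h t)).
  by apply: continuous_compact_integrable => //; exact: segment_compact.
by apply: integrableS => //; apply: subset_itvl; rewrite bnd_simp.
Qed.

Lemma lag_expectD (h1 h2 : R -> R) :
  {within `[0, dt], continuous h1} -> {within `[0, dt], continuous h2} ->
  lag_expect (fun t => h1 t + h2 t) = lag_expect h1 + lag_expect h2.
Proof.
move=> c1 c2; rewrite /lag_expect -RintegralD //; try exact: lag_integrable.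
by apply: eq_Rintegral => t _; rewrite mulrDr.
Qed.

Lemma lag_expectB (h1 h2 : R -> R) :
  {within `[0, dt], continuous h1} -> {within `[0, dt], continuous h2} ->
  lag_expect (fun t => h1 t - h2 t) = lag_expect h1 - lag_expect h2.
Proof.
move=> c1 c2; rewrite /lag_expect -RintegralB //; try exact: lag_integrable.
by apply: eq_Rintegral => t _; rewrite mulrBr.
Qed.

Lemma lag_expectZ (k : R) (h : R -> R) : {within `[0, dt], continuous h} ->
  lag_expect (fun t => k * h t) = k * lag_expect h.
Proof.
move=> ch; rewrite /lag_expect -RintegralZl //; last exact: lag_integrable.
by apply: eq_Rintegral => t _; rewrite mulrCA.
Qed.

Lemma lag_expect_antiderivative (h F : R -> R) :
  {within `[0, dt], continuous h} -> {within `[0, dt], continuous F} ->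
  (forall t, 0 < t < dt -> is_derive t (1 : R) F (expR (- (mu * t)) * h t)) ->
  lag_expect h = lag_scale * (F dt - F 0).
Proof.
move=> ch cF dF.
rewrite mulrBr; apply: (@Rintegral_continuous_FTC2 R 0 dt _ (fun t => lag_scale * F t)) => //.
- exact: continuous_lag_weighted.
- by move=> x; apply: continuousM (cF x); exact: cst_continuous.
- by move=> t /dF dFt; apply: trigger_derive; rewrite /lag_density /GRing.scale /= mulrA.
Qed.

Lemma lag_expect_cst (k : R) : lag_expect (fun=> k) = k.
Proof.
pose F t := - (k / mu) * expR (- (mu * t)).
have cF : continuous F.
  by move=> t; exact: continuousM (@cst_continuous R R _ t) (continuous_expN mu t).
have dF t : 0 < t < dt -> is_derive t (1 : R) F (expR (- (mu * t)) * k).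
  move=> _; apply: trigger_derive.
  by rewrite /GRing.scale /= mulr1; field; rewrite gt_eqF.
have e_lt1 : expR (- (mu * dt)) < 1 by rewrite expR_lt1 oppr_lt0 mulr_gt0.
rewrite (lag_expect_antiderivative _ _ _ _ dF); last 2 first.
- by apply: continuous_subspaceT => ?; exact: cst_continuous.
- exact: continuous_subspaceT.
rewrite /F mulr0 oppr0 expR0; field.
by rewrite gt_eqF //= subr_eq0 eq_sym lt_eqF.
Qed.

Lemma lag_expect_centered_mul (a b : R -> R) :
  {within `[0, dt], continuous a} -> {within `[0, dt], continuous b} ->
  lag_expect (fun t => (a t - lag_expect a) * (b t - lag_expect b)) =
  lag_expect (fun t => a t * b t) - lag_expect a * lag_expect b.
Proof.
move=> ca cb; set Ea := lag_expect a; set Eb := lag_expect b.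
have cst k : {within `[0, dt], continuous (fun=> k : R)}.
  by apply: continuous_subspaceT => ?; exact: cst_continuous.
have cab : {within `[0, dt], continuous (fun t => a t * b t)}.
  by move=> x; exact: continuousM (ca x) (cb x).
have cZ (k : R) (f : R -> R) : {within `[0, dt], continuous f} ->
    {within `[0, dt], continuous (fun t => k * f t)}.
  by move=> cf x; exact: continuousM (cst k x) (cf x).
have -> : (fun t => (a t - Ea) * (b t - Eb)) =
    (fun t => a t * b t - (Eb * a t + (Ea * b t - Ea * Eb))).
  by apply/funext => t; ring.
rewrite lag_expectB //; last first.
  by move=> x; exact: continuousD (cZ _ _ ca x) (continuousB (cZ _ _ cb x) (cst _ x)).
rewrite lag_expectD ?lag_expectB ?lag_expectZ ?lag_expect_cst -/Ea -/Eb //; first ring.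
- exact: cZ.
- exact: cZ.
- by move=> x; exact: continuousB (cZ _ _ cb x) (cst _ x).
Qed.

Lemma lag_meanE p q (g : R -> 'M[R]_(p, q)) i j :
  lag_mean mu dt g i j = lag_expect (fun t => g t i j).
Proof. by rewrite mxE. Qed.

Lemma lag_meanD p q (g h : R -> 'M[R]_(p, q)) :
  {within `[0, dt], continuous g} -> {within `[0, dt], continuous h} ->
  lag_mean mu dt (fun t => g t + h t) = lag_mean mu dt g + lag_mean mu dt h.
Proof.
move=> /continuous_within_mxP cg /continuous_within_mxP ch.
apply/matrixP => i j; rewrite !mxE -lag_expectD //.
by congr lag_expect; apply/funext => t; rewrite mxE.
Qed.

Lemma lag_mean_antiderivative p q (g G : R -> 'M[R]_(p, q)) :
  {within `[0, dt], continuous g} -> {within `[0, dt], continuous G} ->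
  (forall t, 0 < t < dt -> is_derive t (1 : R) G (expR (- (mu * t)) *: g t)) ->
  lag_mean mu dt g = lag_scale *: (G dt - G 0).
Proof.
move=> /continuous_within_mxP cg /continuous_within_mxP cG dG.
apply/matrixP => i j; rewrite lag_meanE !mxE.
apply: (@lag_expect_antiderivative _ (fun t => G t i j)) => // t /dG /(is_derive_entry i j).
by rewrite mxE.
Qed.

Lemma lag_mean_centered_outer n (g : R -> 'cV[R]_n) :
  {within `[0, dt], continuous g} ->
  lag_mean mu dt (fun t => (g t - lag_mean mu dt g) *m (g t - lag_mean mu dt g)^T) =
  lag_mean mu dt (fun t => g t *m (g t)^T) - lag_mean mu dt g *m (lag_mean mu dt g)^T.
Proof.
move=> /continuous_within_mxP cg.
have outerE (u v : 'cV[R]_n) i j : (u *m v^T) i j = u i ord0 * v j ord0.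
  by rewrite !mxE big_ord1 mxE.
apply/matrixP => i j; rewrite [RHS]mxE [X in _ + X]mxE outerE !lag_meanE.
under [in RHS]eq_lag_expect => t do rewrite outerE.
rewrite -lag_expect_centered_mul //; congr lag_expect; apply/funext => t.
by rewrite outerE !mxE.
Qed.

End lag_expectation.

Theorem proposition8 (R : realType) (nx nb : nat)
  (f : 'cV[R]_nx -> 'cV[R]_nx) (L : 'cV[R]_nx -> 'M[R]_(nx, nb))
  (Q : 'M[R]_nb) (xa : 'cV[R]_nx) (Pa : 'M[R]_nx) (mu dt : R)
  (m : R -> 'cV[R]_nx) (P : R -> 'M[R]_nx)
  (xbar : R -> 'cV[R]_nx) (Sig : R -> 'M[R]_nx) :
  (forall x, differentiable f x) ->
  Q^T = Q -> (forall v : 'cV[R]_nb, 0 <= (v^T *m Q *m v) ord0 ord0) ->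
  Pa^T = Pa -> (forall v : 'cV[R]_nx, 0 <= (v^T *m Pa *m v) ord0 ord0) ->
  0 < mu -> 0 < dt ->
  (* m, P solve the moment ODEs on [0, dt] *)
  {within `[0, dt], continuous m} -> {within `[0, dt], continuous P} ->
  (forall t : R, 0 < t < dt -> is_derive t (1 : R) m (f (m t))) ->
  (forall t : R, 0 < t < dt -> is_derive t (1 : R) P
     (P t *m (jacobian_cV f (m t))^T + jacobian_cV f (m t) *m P t
      + L (m t) *m Q *m (L (m t))^T)) ->
  m 0 = xa -> P 0 = Pa ->
  (* xbar, Sig solve the augmented ODEs on [0, dt] *)
  {within `[0, dt], continuous xbar} -> {within `[0, dt], continuous Sig} ->
  (forall t : R, 0 < t < dt -> is_derive t (1 : R) xbar (expR (- (mu * t)) *: m t)) ->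
  (forall t : R, 0 < t < dt -> is_derive t (1 : R) Sig
     (expR (- (mu * t)) *: (P t + m t *m (m t)^T))) ->
  xbar 0 = 0 -> Sig 0 = 0 ->
  birth_mean mu dt m = (mu / (1 - expR (- (mu * dt)))) *: xbar dt /\
  birth_cov mu dt m P =
    (mu / (1 - expR (- (mu * dt)))) *: Sig dt
    - birth_mean mu dt m *m (birth_mean mu dt m)^T.
Proof.
move=> _ _ _ _ _ mu_gt0 dt_gt0 cm cP _ _ _ _ cxbar cSig dxbar dSig xbar0 Sig0.
split.
  by rewrite -[xbar dt]subr0 -xbar0; exact: lag_mean_antiderivative.
rewrite /birth_cov /= lag_mean_centered_outer // addrAC [X in X - _]addrC.
rewrite -lag_meanD //; last exact: continuous_within_outer.
congr (_ - _); rewrite -[Sig dt]subr0 -Sig0; apply: lag_mean_antiderivative => //.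
by move=> x; apply: continuousD (cP x) _; exact: continuous_within_outer.
Qed.
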